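(* Let $K, L$ be compact convex subsets of $\mathbb{R}^n$, and let $d \geq 2$ (with $d\le n$). Suppose that for every $d$-dimensional linear subspace $\xi$ of $\mathbb{R}^n$, the projection $L_\xi$ contains a translate of $K_\xi$. If $K$ and $L$ have the same diameter, then $L$ contains a translate of $K$.
   Context: For a set $S\subseteq\mathbb{R}^n$ and a linear subspace $\xi$, $S_\xi$ denotes the orthogonal projection of $S$ onto $\xi$. *)

From HB Require Import structures.
From mathcomp Require Import all_boot all_order all_algebra.
From mathcomp Require Import all_classical all_reals all_analysis.
Set Implicit Arguments. Unset Strict Implicit. Unset Printing Implicit Defensive.
Import Order.TTheory GRing.Theory Num.Theory.
Import numFieldNormedType.Exports.
Local Open Scope classical_set_scope.
Local Open Scope ring_scope.

(* Euclidean norm on R^n (the library's default norm on matrices is the sup norm). *)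
Definition enorm (R : realType) (n : nat) (x : 'rV[R]_n) : R :=
  Num.sqrt (\sum_(i < n) x ord0 i ^+ 2).

Definition diam (R : realType) (n : nat) (S : set 'rV[R]_n) : R :=
  sup [set enorm (x - y) | x in S & y in S].

Definition convex_set_Rn (R : realType) (n : nat) (S : set 'rV[R]_n) : Prop :=
  forall x y, S x -> S y -> forall l : R, 0 <= l <= 1 -> S (l *: x + (1 - l) *: y).

Definition is_orth_proj (R : realType) (n : nat) (V : 'M[R]_n) (x y : 'rV[R]_n) : Prop :=
  (y <= V)%MS /\ (x - y) *m V^T = 0.

(* Orthogonal projection S_xi of a set S onto xi = row space of V. *)
Definition proj_set (R : realType) (n : nat) (V : 'M[R]_n) (S : set 'rV[R]_n) : set 'rV[R]_n :=
  [set y | exists2 x, S x & is_orth_proj V x y].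

Definition contains_translate (R : realType) (n : nat) (B A : set 'rV[R]_n) : Prop :=
  exists t : 'rV[R]_n, [set a + t | a in A] `<=` B.

From HB Require Import structures.
From mathcomp Require Import all_boot all_order all_algebra.
From mathcomp Require Import all_classical all_reals all_analysis.
From mathcomp Require Import ring lra.
Set Implicit Arguments. Unset Strict Implicit. Unset Printing Implicit Defensive.
Import Order.TTheory GRing.Theory Num.Theory.
Import numFieldNormedType.Exports.
Local Open Scope classical_set_scope.
Local Open Scope ring_scope.

(* Let [q, q + v] be a diameter of K.  A chord [a, a + v] of L is then a diameter
   of L, and it is unique: for another one [b, b + v] we would have
   |a + v - b|^2 + |b + v - a|^2 = 2|v|^2 + 2|a - b|^2.  For every d-dimensional
   subspace xi containing v, the translate of K_xi inside L_xi lifts the diameter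
   of K to such a chord, hence to [a, a + v] itself, so the translation vector
   differs from a - q by a vector orthogonal to xi.  Now if z + (a - q) escaped L
   for some z in K, let y be its nearest point in L and w = z + (a - q) - y; for
   xi containing both v and w (this needs d >= 2), the point of L over the
   projection of z translated lies in z + (a - q) + xi^perp, so it makes an acute
   angle with w at y, contradicting the choice of y. *)

Section EuclideanInnerProduct.
Variables (R : realType) (n : nat).
Implicit Types (x y z u w : 'rV[R]_n).

Definition dot x y : R := (x *m y^T) 0 0.
Definition sqnorm x := dot x x.

Lemma dotC x y : dot x y = dot y x.
Proof. by rewrite /dot -(trmxK (y *m x^T)) trmx_mul trmxK [RHS]mxE. Qed.

Lemma dotDl x y z : dot (x + y) z = dot x z + dot y z.
Proof. by rewrite /dot mulmxDl mxE. Qed.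

Lemma dotBl x y z : dot (x - y) z = dot x z - dot y z.
Proof. by rewrite /dot mulmxBl !mxE. Qed.

Lemma dotZl (a : R) x z : dot (a *: x) z = a * dot x z.
Proof. by rewrite /dot -scalemxAl mxE. Qed.

Lemma dotDr x y z : dot z (x + y) = dot z x + dot z y.
Proof. by rewrite dotC dotDl !(dotC z). Qed.

Lemma dotBr x y z : dot z (x - y) = dot z x - dot z y.
Proof. by rewrite dotC dotBl !(dotC z). Qed.

Lemma dotZr (a : R) x z : dot z (a *: x) = a * dot z x.
Proof. by rewrite dotC dotZl dotC. Qed.

Lemma sqnormE x : sqnorm x = \sum_(i < n) x 0 i ^+ 2.
Proof. by rewrite /sqnorm /dot mxE; apply: eq_bigr => i _; rewrite mxE expr2. Qed.

Lemma sqnorm_ge0 x : 0 <= sqnorm x.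
Proof. by rewrite sqnormE; apply: sumr_ge0 => i _; apply: sqr_ge0. Qed.

Lemma sqnorm_eq0 x : sqnorm x = 0 -> x = 0.
Proof.
rewrite sqnormE => /(psumr_eq0P (fun i _ => sqr_ge0 (x 0 i))) x0.
by apply/rowP => i; rewrite mxE; apply/eqP; rewrite -sqrf_eq0 x0.
Qed.

Lemma enormE x : enorm x = Num.sqrt (sqnorm x).
Proof. by rewrite sqnormE. Qed.

Lemma sqnorm_enorm x : sqnorm x = enorm x ^+ 2.
Proof. by rewrite enormE sqr_sqrtr ?sqnorm_ge0. Qed.

Lemma sqnormD x y : sqnorm (x + y) = sqnorm x + 2 * dot x y + sqnorm y.
Proof. rewrite /sqnorm dotDl !dotDr (dotC y x); ring. Qed.

Lemma sqnormB x y : sqnorm (x - y) = sqnorm x - 2 * dot x y + sqnorm y.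
Proof. rewrite /sqnorm dotBl !dotBr (dotC y x); ring. Qed.

Lemma dot_orth m (V : 'M[R]_(m, n)) u w : u *m V^T = 0 -> (w <= V)%MS -> dot u w = 0.
Proof. by move=> uV /submxP [k ->]; rewrite /dot trmx_mul mulmxA uV mul0mx mxE. Qed.

Lemma sqnorm_continuous : continuous sqnorm.
Proof.
rewrite (_ : sqnorm = fun x => \sum_(i < n) x 0 i ^+ 2); last exact/funext/sqnormE.
apply: (@continuous_big _ _ +%R 0 xpredT add_continuous) => i _ x.
apply: (@continuous_comp _ _ _ (fun x : 'rV[R]_n => x 0 i) (fun r => r ^+ 2)).
  exact: coord_continuous.
exact: exprn_continuous.
Qed.

End EuclideanInnerProduct.

Section Subspaces.
Variables (R : realType) (n : nat).

Lemma mxrank_mulmx_tr m (V : 'M[R]_(m, n)) : \rank (V *m V^T) = \rank V.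
Proof.
rewrite -[RHS](mxrank_mul_ker V V^T); suff -> : (V :&: kermx V^T)%MS = 0 by rewrite mxrank0 addn0.
apply/row_matrixP => i; rewrite row0; set u := row i _.
have uV : (u <= V)%MS by rewrite (submx_trans (row_sub _ _)) ?capmxSl.
have uK : u *m V^T = 0 by apply/sub_kermxP; rewrite (submx_trans (row_sub _ _)) ?capmxSr.
exact: sqnorm_eq0 (dot_orth uK uV).
Qed.

Lemma orth_proj_exists (V : 'M[R]_n) (x : 'rV[R]_n) : exists y, is_orth_proj V x y.
Proof.
have VtVVt : (V^T <= V *m V^T)%MS.
  by have [_ <-] := mxrank_leqif_sup (submxMl V V^T); rewrite mxrank_mulmx_tr mxrank_tr.
exists (x *m V^T *m pinvmx (V *m V^T) *m V); split; first exact: submxMl.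
by rewrite mulmxBl -(mulmxA _ V) mulmxKpV ?subrr // (submx_trans (submxMl _ _)).
Qed.

Lemma exists_supmx_of_rank m (A : 'M[R]_(m, n)) k : (\rank A <= k <= n)%N ->
  exists V : 'M[R]_n, \rank V = k /\ (A <= V)%MS.
Proof.
case/andP=> Ak kn; set j := (k - \rank A)%N.
pose B : 'M[R]_n := pid_mx j *m row_base A^C%MS.
have BAC : (B <= A^C)%MS by rewrite (submx_trans (submxMl _ _)) ?eq_row_base.
have rB : \rank B = j.
  rewrite mxrankMfree ?row_base_free // rank_pid_mx // ?mxrank_compl.
  - by rewrite /j leq_subLR (leq_trans kn) ?leq_addl.
  - by rewrite leq_sub2r.
exists (A + B)%MS; split; last exact: addsmxSl.
rewrite mxrank_disjoint_sum ?rB ?subnKC //.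
by apply/eqP; rewrite -submx0 -(capmx_compl A) capmxS.
Qed.

End Subspaces.

Lemma proj_translate_lift (R : realType) (n : nat) (V : 'M[R]_n) (K L : set 'rV[R]_n) t k :
  [set a + t | a in proj_set V K] `<=` proj_set V L -> K k ->
  exists2 l, L l & (l - (k + t)) *m V^T = 0.
Proof.
move=> KL Kk; have [k0 kk0] := orth_proj_exists V k.
have [l Ll [_ ll0]] : proj_set V L (k0 + t) by apply: KL; exists k0 => //; exists k.
exists l => //; have -> : l - (k + t) = (l - (k0 + t)) - (k - k0).
  by apply/rowP => i; rewrite !mxE; ring.
by rewrite mulmxBl ll0 kk0.2 subrr.
Qed.

Section CompactSets.
Variables (R : realType) (n : nat).
Implicit Types (S : set 'rV[R]_n) (p q x y z : 'rV[R]_n).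

Lemma compact_sqnorm_max S : compact S -> S !=set0 ->
  exists p q, [/\ S p, S q & forall x y, S x -> S y -> sqnorm (x - y) <= sqnorm (p - q)].
Proof.
move=> cS [x0 Sx0]; pose f (xy : 'rV[R]_n * 'rV[R]_n) := sqnorm (xy.1 - xy.2).
have f_cont : continuous f.
  by move=> xy; apply: continuous_comp; [exact: sub_continuous | exact: sqnorm_continuous].
have [[p q]] := compact_EVT_max (ex_intro _ (x0, x0) (conj Sx0 Sx0))
  (compact_setX cS cS) (continuous_subspaceT f_cont).
rewrite inE => -[Sp Sq] max_pq; exists p, q; split => // x y Sx Sy.
by apply: (max_pq (x, y)); rewrite inE.
Qed.

Lemma diam_sqnorm_max S p q : S p -> S q ->
  (forall x y, S x -> S y -> sqnorm (x - y) <= sqnorm (p - q)) -> diam S = enorm (p - q).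
Proof.
move=> Sp Sq max_pq; set D := [set enorm (x - y) | x in S & y in S].
have D_pq : D (enorm (p - q)) by exists p => //; exists q.
have ub_pq : ubound D (enorm (p - q)).
  by move=> _ [x Sx [y Sy <-]]; rewrite !enormE; apply/ler_wsqrtr/max_pq.
apply/le_anti/andP; split; first exact: ge_sup (ex_intro _ _ D_pq) ub_pq.
by apply: ub_le_sup => //; exists (enorm (p - q)).
Qed.

Lemma convex_nearest_point S z : compact S -> convex_set_Rn S -> S !=set0 ->
  exists2 y, S y & forall x, S x -> dot (x - y) (z - y) <= 0.
Proof.
move=> cS vS neS; pose f x := sqnorm (z - x).
have f_cont : continuous f.
  move=> x; apply: continuous_comp; last exact: sqnorm_continuous.
  by apply: continuousB; [exact: cst_continuous | exact: cvg_id].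
have [y] := compact_EVT_min neS cS (continuous_subspaceT f_cont).
rewrite inE => Sy min_y; exists y => // x Sx; rewrite leNgt; apply/negP => c_gt0.
set c := dot (x - y) (z - y) in c_gt0; set s := sqnorm (x - y).
have s_ge0 : 0 <= s by exact: sqnorm_ge0.
(* Moving from y towards x by l = c / (s + c) strictly decreases the distance to z. *)
set l := c / (s + c).
have l_gt0 : 0 < l by apply: divr_gt0 => //; lra.
have l_le1 : l <= 1 by rewrite ler_pdivrMr; lra.
have := min_y _ (mem_set (vS _ _ Sx Sy l _)); rewrite (ltW l_gt0) l_le1 => /(_ isT).
rewrite /f; have -> : z - (l *: x + (1 - l) *: y) = (z - y) - l *: (x - y).
  by apply/rowP => i; rewrite !mxE; ring.
rewrite (sqnormB (z - y)) dotZr dotC -/c /sqnorm dotZl dotZr -/(sqnorm (x - y)) -/s.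
have : l * s < c.
  by rewrite /l mulrAC ltr_pdivrMr; [nra | lra].
nra.
Qed.

End CompactSets.

Section DiametralChords.
Variables (R : realType) (n : nat) (L : set 'rV[R]_n) (v : 'rV[R]_n).
Hypothesis L_sqnorm_le : forall x y, L x -> L y -> sqnorm (x - y) <= sqnorm v.

Lemma diametral_chord_unique a b : L a -> L (a + v) -> L b -> L (b + v) -> a = b.
Proof.
move=> La Lav Lb Lbv; have := L_sqnorm_le Lav Lb; have := L_sqnorm_le Lbv La.
have -> : a + v - b = v + (a - b) by apply/rowP => i; rewrite !mxE; ring.
have -> : b + v - a = v - (a - b) by apply/rowP => i; rewrite !mxE; ring.
rewrite (sqnormB v) (sqnormD v) => le1 le2; have := sqnorm_ge0 (a - b).
have : sqnorm (a - b) <= 0 by lra.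
by move=> ab_le0 ab_ge0; apply/eqP; rewrite -subr_eq0; apply/eqP/sqnorm_eq0/le_anti/andP.
Qed.

Lemma diametral_chord_orth l1 l2 : L l1 -> L l2 -> dot (l2 - l1 - v) v = 0 -> l2 = l1 + v.
Proof.
move=> L1 L2 e_orth; have := L_sqnorm_le L2 L1.
rewrite -[l2 - l1](subrK v) addrC sqnormD dotC e_orth mulr0 addr0 -lerBrDl subrr => e_le0.
have /sqnorm_eq0/eqP : sqnorm (l2 - l1 - v) = 0 by apply/le_anti; rewrite e_le0 sqnorm_ge0.
by rewrite subr_eq0 subr_eq addrC => /eqP.
Qed.

End DiametralChords.

Section TranslateAlongChord.
Variables (R : realType) (n d : nat) (K L : set 'rV[R]_n) (p v : 'rV[R]_n).
Hypotheses (cL : compact L) (vL : convex_set_Rn L) (d_ge2 : (2 <= d)%N) (d_le : (d <= n)%N).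
Hypothesis projKL : forall V : 'M[R]_n, \rank V = d ->
  contains_translate (proj_set V L) (proj_set V K).
Hypotheses (Kp : K p) (Kpv : K (p + v)).
Hypothesis L_sqnorm_le : forall x y, L x -> L y -> sqnorm (x - y) <= sqnorm v.

Lemma diametral_chord_lift (V : 'M[R]_n) t : (v <= V)%MS ->
  [set a + t | a in proj_set V K] `<=` proj_set V L ->
  exists a, [/\ L a, L (a + v) & (a - (p + t)) *m V^T = 0].
Proof.
move=> vV KL; have [a La a_orth] := proj_translate_lift KL Kp.
have [b Lb b_orth] := proj_translate_lift KL Kpv.
exists a; split => //; rewrite -(diametral_chord_orth L_sqnorm_le La Lb) //.
apply: dot_orth vV; have -> : b - a - v = (b - (p + v + t)) - (a - (p + t)).
  by apply/rowP => i; rewrite !mxE; ring.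
by rewrite mulmxBl a_orth b_orth subrr.
Qed.

Lemma translate_along_diametral_chord a : L a -> L (a + v) ->
  forall z, K z -> L (z + (a - p)).
Proof.
move=> La Lav z Kz; set z' := z + (a - p).
have neL : L !=set0 by exists a.
have [y Ly y_near] := convex_nearest_point z' cL vL neL.
apply: contrapT => z'L; set w := z' - y.
have w_neq0 : sqnorm w != 0.
  by apply: contra_notN z'L => /eqP/sqnorm_eq0/eqP; rewrite subr_eq0 => /eqP ->.
have [V [rV]] : exists V : 'M[R]_n, \rank V = d /\ (col_mx v w <= V)%MS.
  by apply: exists_supmx_of_rank; rewrite d_le (leq_trans (rank_leq_row _)).
rewrite col_mx_sub => /andP [vV wV]; have [t KL] := projKL rV.
have [a' [La' La'v a_orth]] := diametral_chord_lift vV KL.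
rewrite (diametral_chord_unique L_sqnorm_le La' La'v La Lav) in a_orth.
have [x Lx x_orth] := proj_translate_lift KL Kz.
have xz'_orth : dot (x - z') w = 0.
  apply: dot_orth wV; have -> : x - z' = (x - (z + t)) - (a - (p + t)).
    by apply/rowP => i; rewrite !mxE; ring.
  by rewrite mulmxBl x_orth a_orth subrr.
have := y_near _ Lx; rewrite (_ : x - y = (x - z') + w); last by rewrite addrA subrK.
by rewrite dotDl xz'_orth add0r leNgt lt_def w_neq0 sqnorm_ge0.
Qed.

End TranslateAlongChord.

Theorem corollary2p7 (R : realType) (n d : nat) (K L : set 'rV[R]_n) :
  compact K -> convex_set_Rn K ->
  compact L -> convex_set_Rn L ->
  (2 <= d)%N -> (d <= n)%N ->
  (forall V : 'M[R]_n, \rank V = d ->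
     contains_translate (proj_set V L) (proj_set V K)) ->
  diam K = diam L ->
  contains_translate L K.
Proof.
move=> cK vK cL vL d_ge2 d_le projKL diamKL.
have [-> | /set0P neK] := eqVneq K set0.
  by exists 0; rewrite image_set0; exact: sub0set.
have [p [q [Kp Kq maxK]]] := compact_sqnorm_max cK neK.
set v := p - q; have Kqv : K (q + v) by rewrite addrC subrK.
have [V0 [rV0 vV0]] : exists V : 'M[R]_n, \rank V = d /\ (v <= V)%MS.
  by apply: exists_supmx_of_rank; rewrite d_le (leq_trans (rank_leq_row _)) // ltnW.
have [t0 t0KL] := projKL _ rV0.
have neL : L !=set0 by have [l Ll _] := proj_translate_lift t0KL Kq; exists l.
have [p' [q' [Lp' Lq' maxL]]] := compact_sqnorm_max cL neL.
have L_sqnorm_le x y : L x -> L y -> sqnorm (x - y) <= sqnorm v.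
  rewrite !sqnorm_enorm -(diam_sqnorm_max Kp Kq maxK) diamKL.
  by rewrite (diam_sqnorm_max Lp' Lq' maxL) -!sqnorm_enorm; apply: maxL.
have [a [La Lav _]] := diametral_chord_lift Kq Kqv L_sqnorm_le vV0 t0KL.
exists (a - q) => _ [z Kz <-].
exact: (translate_along_diametral_chord cL vL d_ge2 d_le projKL Kq Kqv L_sqnorm_le La Lav Kz).
Qed.
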